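(* Let $(x,q)\in\mathbf J$. Then $(x,q)$ belongs to the closure $\overline{\mathbf U}$ (in $\mathbb R^2$) of $\mathbf U$ if and only if $$\overline{a_{n+1}(x,q)a_{n+2}(x,q)\ldots}\le \alpha_1(q)\alpha_2(q)\ldots\quad\text{(lexicographically) for every } n\ge1 \text{ with } a_n(x,q)>0.$$
   Context: For real $q>1$ let $\lceil q\rceil$ be the smallest integer $\ge q$ and $A_q=\{0,1,\ldots,\lceil q\rceil-1\}$. An expansion of $x$ in base $q$ is a sequence $(c_i)_{i\ge1}$ with $c_i\in A_q$ and $x=\sum_{i\ge1}c_iq^{-i}$. Let $\mathbf J$ be the set of $(x,q)\in\mathbb R\times(1,\infty)$ such that $x$ has at least one expansion in base $q$; equivalently $q>1$ and $x\in J_q:=[0,(\lceil q\rceil-1)/(q-1)]$. Let $\mathbf U$ be the set of $(x,q)\in\mathbf J$ such that $x$ has exactly one expansion in base $q$. For $(x,q)\in\mathbf J$, the quasi-greedy expansion $(a_i(x,q))$ is defined as follows: if $x=0$ it is $0^\infty$; if $x>0$ and $a_1(x,q),\ldots,a_{n-1}(x,q)$ are defined, $a_n(x,q)$ is the largest element of $A_q$ with $\sum_{i=1}^n a_i(x,q)q^{-i}<x$. Set $\alpha_i(q):=a_i(1,q)$; note $\alpha_1(q)=\lceil q\rceil-1$. The conjugate of a digit is $\overline{a_i(x,q)}:=\alpha_1(q)-a_i(x,q)$, and for a sequence $\overline{c_1c_2\ldots}:=\overline{c_1}\,\overline{c_2}\ldots$. Sequences are compared in the lexicographic order. *)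

From Stdlib Require Import Reals Lra Lia.
Open Scope R_scope.

(* Sequences of digits are functions nat -> nat, indexed from 1:
   the value at index 0 is ignored. *)

(* ceil q = smallest integer >= q  (= - floor(-q)); as a nat (q > 1). *)
Definition ceilq (q : R) : nat := Z.to_nat (- Int_part (- q))%Z.

(* largest digit of A_q = {0,...,ceil q - 1} *)
Definition maxdigit (q : R) : nat := (ceilq q - 1)%nat.

Definition is_expansion (q x : R) (c : nat -> nat) : Prop :=
  (forall i, (1 <= i)%nat -> (c i <= maxdigit q)%nat) /\
  infinite_sum (fun k => INR (c (S k)) / q ^ (S k)) x.

Definition inJ (x q : R) : Prop := 1 < q /\ exists c, is_expansion q x c.

Definition inU (x q : R) : Prop :=
  inJ x q /\
  forall c d, is_expansion q x c -> is_expansion q x d ->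
    forall i, (1 <= i)%nat -> c i = d i.

(* closure of U in R^2 (sup-norm balls, giving the usual topology of R^2) *)
Definition in_closure_U (x q : R) : Prop :=
  forall eps, 0 < eps ->
    exists y r, inU y r /\ Rabs (x - y) < eps /\ Rabs (q - r) < eps.

(* largest d in {0..m} satisfying P (0 if none of 1..m does) *)
Fixpoint largest_upto (P : nat -> bool) (m : nat) : nat :=
  match m with
  | O => O
  | S k => if P (S k) then S k else largest_upto P k
  end.

Definition qg_pick (x q s : R) (n : nat) : nat :=
  largest_upto (fun d => if Rlt_dec (s + INR d / q ^ n) x then true else false)
    (maxdigit q).

(* partial sums sum_{i=1}^n a_i(x,q) q^{-i} of the quasi-greedy expansion (x > 0) *)
Fixpoint qg_sum (x q : R) (n : nat) : R :=
  match n with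
  | O => 0
  | S k => qg_sum x q k + INR (qg_pick x q (qg_sum x q k) (S k)) / q ^ (S k)
  end.

Definition qg_digit (x q : R) (n : nat) : nat :=
  match n with
  | O => O
  | S k => if Req_EM_T x 0 then O else qg_pick x q (qg_sum x q k) (S k)
  end.

Definition alpha (q : R) (n : nat) : nat := qg_digit 1 q n.

(* lexicographic order u <= v on infinite sequences (indexed from 0) *)
Definition lex_le (u v : nat -> nat) : Prop :=
  (forall i, u i = v i) \/
  exists k, (forall i, (i < k)%nat -> u i = v i) /\ (u k < v k)%nat.

(* Along an expansion of [x] in base [q] the normalized remainders
   [q^N (x - sum_{i<=N} c_i q^-i)] stay in [J_q], and [x] has a unique expansion exactly when
   this constraint forces every digit.  A Parry-type argument shows that digits are forced when
   every tail following a non-maximal digit, and every conjugate tail following a nonzero digit,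
   is lexicographically below [alpha(q)].

   If the condition holds at [(x, q)], raising [q] slightly makes [alpha] strictly larger, so the
   quasi-greedy digits of [x] become the unique expansion of a nearby point; for an integer base
   one lowers [q] instead, which makes [alpha] begin with a long block of maximal digits, and
   breaks the long runs of [0] and of the maximal digit far out in the digits of [x].

   If the condition fails after a digit [a_n > 0], the remainder of [x] at step [n] lies more than
   [1] below the end of [J_q].  A point of [U] close to [(x, q)] must copy the quasi-greedy digits
   up to [n], and then [a_n - 1] would be an admissible alternative digit. *)

From Stdlib Require Import Reals Lra Lia ZArith List Classical.
Open Scope R_scope.

Lemma maxdigit_of_bounds (r : R) (j : nat) : INR j < r -> r <= INR j + 1 -> maxdigit r = j.
Proof.
  intros H1 H2. unfold maxdigit, ceilq, Int_part.
  assert (E : up (- r) = (- Z.of_nat j)%Z).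
  { symmetry. apply tech_up; rewrite opp_IZR, <- INR_IZR_INZ; lra. }
  rewrite E. replace (- (- Z.of_nat j - 1))%Z with (Z.of_nat (S j)) by lia.
  rewrite Nat2Z.id. lia.
Qed.

Lemma maxdigit_spec (q : R) : 1 < q ->
  INR (maxdigit q) < q /\ q <= INR (maxdigit q) + 1 /\ (1 <= maxdigit q)%nat.
Proof.
  intros Hq. unfold maxdigit, ceilq, Int_part.
  destruct (archimed (- q)) as [H1 H2].
  set (z := up (- q)) in *.
  assert (Hk : (2 <= - (z - 1))%Z).
  { assert (IZR z < 0) by lra. assert (z < 0)%Z by (apply lt_IZR; lra). lia. }
  set (k := (- (z - 1))%Z) in *.
  assert (Ek : IZR k = 1 - IZR z) by (unfold k; rewrite opp_IZR, minus_IZR; lra).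
  assert (E2 : INR (Z.to_nat k - 1) = IZR k - 1).
  { rewrite minus_INR by lia. rewrite INR_IZR_INZ, Z2Nat.id by lia. simpl; lra. }
  rewrite E2. repeat split; try lra. lia.
Qed.

Lemma Rabs_le_between (z e : R) : Rabs z <= e -> - e <= z <= e.
Proof. unfold Rabs. destruct (Rcase_abs z); intros; lra. Qed.

Lemma pow_inv_small (q e : R) : 1 < q -> 0 < e -> exists N, forall n, (N <= n)%nat -> / q ^ n < e.
Proof.
  intros Hq He. destruct (pow_lt_1_zero (/ q)) with (y := e) as [N HN].
  { rewrite Rabs_pos_eq. apply (Rmult_lt_reg_l q); [lra|]. rewrite Rinv_r; lra.
    left; apply Rinv_0_lt_compat; lra. }
  { exact He. }
  exists N. intros n Hn. specialize (HN n Hn). rewrite <- pow_inv.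
  rewrite Rabs_pos_eq in HN; [exact HN|]. apply pow_le. left; apply Rinv_0_lt_compat; lra.
Qed.

Lemma pow_unbounded (r M : R) : 1 < r -> exists N, M < r ^ N.
Proof.
  intros Hr. destruct (Rle_lt_dec M 0) as [H|H]; [exists O; simpl; lra|].
  destruct (pow_inv_small r (/ M) Hr) as [N HN]; [apply Rinv_0_lt_compat; lra|].
  exists N. specialize (HN N (le_n N)). assert (0 < r ^ N) by (apply pow_lt; lra).
  destruct (Rle_lt_dec (r ^ N) M) as [H2|H2]; [|exact H2].
  assert (/ M <= / r ^ N) by (apply Rinv_le_contravar; lra). lra.
Qed.

Lemma le_of_le_add_div_pow (z B C s : R) : 1 < s -> 0 <= C ->
  (forall N, z <= B + C / s ^ N) -> z <= B.
Proof.
  intros Hs HC H. destruct (Rle_lt_dec z B) as [H1|H1]; [exact H1|exfalso].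
  destruct (Req_dec C 0) as [->|HC0].
  { specialize (H O). unfold Rdiv in H. lra. }
  destruct (pow_inv_small s ((z - B) / C) Hs) as [N HN]. { apply Rdiv_lt_0_compat; lra. }
  specialize (HN N (le_n N)). specialize (H N).
  assert (C / s ^ N < z - B); [|lra].
  unfold Rdiv at 1. rewrite Rmult_comm.
  apply Rmult_lt_reg_r with (/ C). { apply Rinv_0_lt_compat; lra. }
  rewrite Rmult_assoc, Rinv_r, Rmult_1_r by lra. exact HN.
Qed.

Lemma Rmult_le_of_le_div (a b c : R) : 0 < c -> a <= b / c -> a * c <= b.
Proof.
  intros Hc H. apply Rmult_le_compat_r with (r := c) in H; [|lra].
  unfold Rdiv in H. rewrite Rmult_assoc, Rinv_l, Rmult_1_r in H by lra. exact H.
Qed.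

Lemma Un_cv_between u l a b n0 : Un_cv u l -> (forall n, (n0 <= n)%nat -> a <= u n <= b) -> a <= l <= b.
Proof.
  intros Hcv Hb. split.
  - destruct (Rle_lt_dec a l) as [H|H]; [exact H|exfalso].
    destruct (Hcv (a - l) ltac:(lra)) as [N HN].
    specialize (HN (max N n0) ltac:(lia)). specialize (Hb (max N n0) ltac:(lia)).
    unfold Rdist in HN. apply Rabs_def2 in HN. lra.
  - destruct (Rle_lt_dec l b) as [H|H]; [exact H|exfalso].
    destruct (Hcv (l - b) ltac:(lra)) as [N HN].
    specialize (HN (max N n0) ltac:(lia)). specialize (Hb (max N n0) ltac:(lia)).
    unfold Rdist in HN. apply Rabs_def2 in HN. lra.
Qed.

Lemma ex_min (P : nat -> Prop) : (exists n, P n) -> exists n, P n /\ forall i, (i < n)%nat -> ~ P i.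
Proof.
  intros [n Hn]. revert Hn. induction n as [n IH] using lt_wf_ind. intros Hn.
  destruct (classic (exists i, (i < n)%nat /\ P i)) as [[i [Hi Pi]]|H].
  - exact (IH i Hi Pi).
  - exists n. split; [exact Hn|]. intros i Hi Pi. apply H. eauto.
Qed.

Lemma exists_pos_le_all (l : list R) : (forall a, In a l -> 0 < a) ->
  exists e, 0 < e /\ forall a, In a l -> e <= a.
Proof.
  induction l as [|a l IH]; intros Hl.
  - exists 1. split; [lra|]. intros a [].
  - destruct IH as [e [He Hle]]; [intros b Hb; apply Hl; now right|].
    exists (Rmin a e). split; [apply Rmin_pos; [apply Hl; now left|exact He]|].
    intros b [<-|Hb]; [apply Rmin_l|]. eapply Rle_trans; [apply Rmin_r|apply Hle, Hb].
Qed.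

(** * The right endpoint of [J_q] *)

Definition jmax (q : R) : R := INR (maxdigit q) / (q - 1).

Lemma jmax_ge1 (q : R) : 1 < q -> 1 <= jmax q.
Proof.
  intros Hq. destruct (maxdigit_spec q Hq) as [H1 [H2 H3]]. unfold jmax.
  apply Rmult_le_reg_r with (q - 1); [lra|]. unfold Rdiv.
  rewrite Rmult_assoc, Rinv_l by lra. lra.
Qed.

Lemma jmax_gt1 (q : R) : 1 < q -> q < INR (maxdigit q) + 1 -> 1 < jmax q.
Proof.
  intros Hq Hn. unfold jmax. apply Rmult_lt_reg_r with (q - 1); [lra|].
  unfold Rdiv. rewrite Rmult_assoc, Rinv_l by lra. lra.
Qed.

Lemma jmax_fixpoint (q : R) : 1 < q -> q * jmax q - INR (maxdigit q) = jmax q.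
Proof. intros Hq. unfold jmax. field. lra. Qed.

Definition jmax_slope (q : R) : R := 2 * INR (maxdigit q) / ((q - 1) * (q - 1)).

Lemma jmax_slope_nonneg (q : R) : 1 < q -> 0 <= jmax_slope q.
Proof.
  intros Hq. unfold jmax_slope. apply Rmult_le_pos; [apply Rmult_le_pos; [lra|apply pos_INR]|].
  left; apply Rinv_0_lt_compat, Rmult_lt_0_compat; lra.
Qed.

Lemma jmax_close (q r eps : R) : 1 < q -> maxdigit r = maxdigit q ->
  Rabs (r - q) <= eps -> eps <= (q - 1) / 2 -> Rabs (jmax q - jmax r) <= eps * jmax_slope q.
Proof.
  intros Hq Hm Hrq He. apply Rabs_le_between in Hrq.
  unfold jmax, jmax_slope. rewrite Hm. set (m := INR (maxdigit q)).
  assert (Hm0 : 0 <= m) by apply pos_INR.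
  set (s := m / ((q - 1) * (r - 1))).
  assert (E : m / (q - 1) - m / (r - 1) = s * (r - q)) by (unfold s; field; lra).
  assert (Hs0 : 0 <= s).
  { unfold s; apply Rmult_le_pos; [lra|left; apply Rinv_0_lt_compat, Rmult_lt_0_compat; lra]. }
  assert (Hs1 : s <= 2 * m / ((q - 1) * (q - 1))).
  { unfold s. replace (2 * m / ((q - 1) * (q - 1))) with (m / ((q - 1) * ((q - 1) / 2))) by (field; lra).
    unfold Rdiv. apply Rmult_le_compat_l; [lra|]. apply Rinv_le_contravar.
    - apply Rmult_lt_0_compat; lra.
    - apply Rmult_le_compat_l; lra. }
  rewrite E. apply Rabs_le. split; nra.
Qed.

(** * Orbits of digit sequences *)

(* [orbit q w c N = q^N (w - sum_{i<=N} c_i q^-i)]: [c] is an expansion of [w]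
   exactly when the orbit stays in [[0, jmax q]] (lemma [is_expansion_iff_admissible]). *)
Fixpoint orbit (q w : R) (c : nat -> nat) (N : nat) : R :=
  match N with O => w | S k => q * orbit q w c k - INR (c (S k)) end.

Definition admissible (q w : R) (c : nat -> nat) : Prop :=
  (forall i, (1 <= i)%nat -> (c i <= maxdigit q)%nat) /\ forall N, 0 <= orbit q w c N <= jmax q.

Lemma orbit_diff q w v c e j : (forall i, (1 <= i <= j)%nat -> c i = e i) ->
  orbit q w c j - orbit q v e j = q ^ j * (w - v).
Proof.
  induction j as [|j IH]; intros Hce; cbn [orbit pow]; [lra|].
  rewrite Hce by lia.
  replace (q * q ^ j * (w - v)) with (q * (q ^ j * (w - v))) by ring.
  rewrite <- IH by (intros; apply Hce; lia). ring.
Qed.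

Lemma orbit_ext q w c e k : (forall i, (1 <= i <= k)%nat -> c i = e i) ->
  orbit q w c k = orbit q w e k.
Proof. intros H. assert (Hd := orbit_diff q w w c e k H). rewrite Rminus_diag, Rmult_0_r in Hd. lra. Qed.

Lemma orbit_shift q w c k N :
  orbit q (orbit q w c k) (fun i => c (k + i)%nat) N = orbit q w c (k + N).
Proof.
  induction N as [|N IH]; cbn [orbit].
  - now rewrite Nat.add_0_r.
  - rewrite IH. replace (k + S N)%nat with (S (k + N)) by lia. reflexivity.
Qed.

Lemma orbit_conj q w c m T N : (forall i, (1 <= i)%nat -> (c i <= m)%nat) -> q * T - INR m = T ->
  orbit q (T - w) (fun i => m - c i)%nat N = T - orbit q w c N.
Proof.
  intros Hc HT. induction N as [|N IH]; cbn [orbit]; [reflexivity|].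
  rewrite IH, minus_INR by (apply Hc; lia). lra.
Qed.

Lemma admissible_shift q w c k : admissible q w c ->
  admissible q (orbit q w c k) (fun i => c (k + i)%nat).
Proof.
  intros [Hc Hp]. split.
  - intros i Hi; apply Hc; lia.
  - intro N. rewrite orbit_shift. apply Hp.
Qed.

Lemma admissible_conj q w c : 1 < q -> admissible q w c ->
  admissible q (jmax q - w) (fun i => maxdigit q - c i)%nat.
Proof.
  intros Hq [Hc Hp]. split; [intros; lia|].
  intro N. rewrite orbit_conj; [|exact Hc|apply jmax_fixpoint, Hq]. specialize (Hp N). lra.
Qed.

Fixpoint partial_sum (q : R) (c : nat -> nat) (N : nat) : R :=
  match N with O => 0 | S k => partial_sum q c k + INR (c (S k)) / q ^ (S k) end.

Lemma sum_f_R0_partial_sum q c N :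
  sum_f_R0 (fun k => INR (c (S k)) / q ^ (S k)) N = partial_sum q c (S N).
Proof. induction N as [|N IH]; cbn [sum_f_R0 partial_sum]; [lra|]. now rewrite IH. Qed.

Lemma orbit_partial_sum q x c N : 1 < q -> orbit q x c N = q ^ N * (x - partial_sum q c N).
Proof.
  intros Hq. induction N as [|N IH]; cbn [orbit partial_sum pow]; [lra|].
  rewrite IH. assert (q ^ N <> 0) by (apply pow_nonzero; lra). field; lra.
Qed.

Lemma partial_sum_bounds q c N M : 1 < q -> (forall i, (1 <= i)%nat -> (c i <= maxdigit q)%nat) ->
  (N <= M)%nat ->
  partial_sum q c N <= partial_sum q c M /\
  partial_sum q c M + jmax q / q ^ M <= partial_sum q c N + jmax q / q ^ N.
Proof.
  intros Hq Hc HNM. induction HNM as [|M HNM IH]; [lra|].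
  cbn [partial_sum]. assert (Hd : INR (c (S M)) <= INR (maxdigit q)) by (apply le_INR, Hc; lia).
  assert (HqM : 0 < q ^ M) by (apply pow_lt; lra).
  assert (Hd0 : 0 <= INR (c (S M))) by apply pos_INR.
  assert (HT := jmax_fixpoint q Hq).
  split.
  - assert (0 <= INR (c (S M)) / q ^ S M).
    { apply Rmult_le_pos; auto; left; apply Rinv_0_lt_compat, pow_lt; lra. }
    lra.
  - assert (E : INR (c (S M)) / q ^ S M + jmax q / q ^ S M <= jmax q / q ^ M).
    { cbn [pow]. replace (INR (c (S M)) / (q * q ^ M) + jmax q / (q * q ^ M)) with
        ((INR (c (S M)) + jmax q) / q / q ^ M) by (field; lra).
      unfold Rdiv. apply Rmult_le_compat_r; [left; apply Rinv_0_lt_compat; lra|].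
      apply Rmult_le_reg_r with q; [lra|]. rewrite Rmult_assoc, Rinv_l by lra. lra. }
    lra.
Qed.

Lemma orbit_bounds_scaled q x c N : 1 < q -> 0 <= orbit q x c N <= jmax q ->
  0 <= x - partial_sum q c N <= jmax q / q ^ N.
Proof.
  intros Hq Hp. rewrite orbit_partial_sum in Hp by exact Hq.
  assert (HqN : 0 < q ^ N) by (apply pow_lt; lra).
  split.
  - apply Rmult_le_reg_l with (q ^ N); lra.
  - apply Rmult_le_reg_l with (q ^ N); [lra|].
    replace (q ^ N * (jmax q / q ^ N)) with (jmax q) by (field; lra). lra.
Qed.

Lemma is_expansion_iff_admissible (q x : R) (c : nat -> nat) : 1 < q ->
  (is_expansion q x c <-> admissible q x c).
Proof.
  intros Hq. unfold is_expansion, admissible. assert (HT1 := jmax_ge1 q Hq).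
  split; intros [Hc Hs]; split; auto.
  - intro N. rewrite orbit_partial_sum by exact Hq.
    assert (HqN : 0 < q ^ N) by (apply pow_lt; lra).
    assert (Hb : partial_sum q c N <= x <= partial_sum q c N + jmax q / q ^ N).
    { apply Un_cv_between with (u := sum_f_R0 (fun k => INR (c (S k)) / q ^ S k)) (n0 := N); [exact Hs|].
      intros n Hn. rewrite sum_f_R0_partial_sum.
      destruct (partial_sum_bounds q c N (S n) Hq Hc ltac:(lia)) as [H1 H2].
      assert (0 <= jmax q / q ^ S n) by (apply Rmult_le_pos; [lra|left; apply Rinv_0_lt_compat, pow_lt; lra]).
      lra. }
    split; [nra|].
    replace (jmax q) with (q ^ N * (jmax q / q ^ N)) by (field; lra).
    apply Rmult_le_compat_l; lra.
  - intros eps Heps.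
    destruct (pow_inv_small q (eps / jmax q) Hq) as [N HN]. { apply Rdiv_lt_0_compat; lra. }
    exists N. intros n Hn. rewrite sum_f_R0_partial_sum. unfold Rdist.
    destruct (orbit_bounds_scaled q x c (S n) Hq (Hs (S n))) as [H1 H2].
    rewrite Rabs_minus_sym, Rabs_pos_eq by exact H1.
    apply Rle_lt_trans with (1 := H2). specialize (HN (S n) ltac:(lia)).
    replace eps with (jmax q * (eps / jmax q)) by (field; lra).
    unfold Rdiv at 1. apply Rmult_lt_compat_l; lra.
Qed.

Lemma admissible_exists r c : 1 < r -> (forall i, (1 <= i)%nat -> (c i <= maxdigit r)%nat) ->
  exists y, admissible r y c.
Proof.
  intros Hr Hc.
  assert (Hg : Un_growing (fun n => partial_sum r c (S n))).
  { intro n. apply (partial_sum_bounds r c (S n) (S (S n)) Hr Hc ltac:(lia)). }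
  assert (Hb : has_ub (fun n => partial_sum r c (S n))).
  { exists (jmax r). intros z [i ->].
    destruct (partial_sum_bounds r c O (S i) Hr Hc ltac:(lia)) as [_ H].
    change (partial_sum r c O) with 0 in H. change (r ^ O) with 1 in H. assert (0 <= jmax r / r ^ S i).
    { apply Rmult_le_pos. assert (H1 := jmax_ge1 r Hr). lra. left; apply Rinv_0_lt_compat, pow_lt; lra. }
    unfold Rdiv in H. rewrite Rinv_1 in H. lra. }
  destruct (growing_cv _ Hg Hb) as [y Hy]. exists y.
  apply is_expansion_iff_admissible; [exact Hr|]. split; [exact Hc|].
  intros eps Heps. destruct (Hy eps Heps) as [N HN]. exists N. intros n Hn.
  rewrite sum_f_R0_partial_sum. auto.
Qed.

Lemma partial_sum_const b m N : 1 < b ->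
  partial_sum b (fun _ => m) N = INR m / (b - 1) * (1 - / b ^ N).
Proof.
  intros Hb. induction N as [|N IH]; cbn [partial_sum pow].
  - field. lra.
  - rewrite IH. assert (b ^ N <> 0) by (apply pow_nonzero; lra). field. split; lra.
Qed.

Lemma partial_sum_base_antitone q r c m N : 1 < q -> q <= r ->
  (forall i, (1 <= i)%nat -> (c i <= m)%nat) ->
  0 <= partial_sum q c N - partial_sum r c N <= partial_sum q (fun _ => m) N - partial_sum r (fun _ => m) N.
Proof.
  intros Hq Hqr Hc. induction N as [|N IH]; cbn [partial_sum]; [lra|].
  assert (Hp : 0 < q ^ S N) by (apply pow_lt; lra).
  assert (Hpp : q ^ S N <= r ^ S N) by (apply pow_incr; lra).
  assert (Hi : / r ^ S N <= / q ^ S N) by (apply Rinv_le_contravar; lra).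
  assert (Hd : INR (c (S N)) <= INR m) by (apply le_INR, Hc; lia).
  assert (Hd0 : 0 <= INR (c (S N))) by apply pos_INR.
  unfold Rdiv. nra.
Qed.

Lemma admissible_base_change_dist q r x y c : 1 < q -> q <= r -> maxdigit q = maxdigit r ->
  admissible q x c -> admissible r y c -> Rabs (x - y) <= jmax q - jmax r.
Proof.
  intros Hq Hqr Hm [Hcq Hpq] [Hcr Hpr].
  assert (Hr : 1 < r) by lra.
  assert (Hb : forall N, Rabs (x - y) <= jmax q - jmax r + jmax r / r ^ N).
  { intro N.
    destruct (partial_sum_base_antitone q r c (maxdigit q) N Hq Hqr Hcq) as [H1 H2].
    rewrite !partial_sum_const in H2 by lra.
    assert (Ex1 := orbit_bounds_scaled q x c N Hq (Hpq N)).
    assert (Ex2 := orbit_bounds_scaled r y c N Hr (Hpr N)).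
    assert (HqN : 0 < q ^ N) by (apply pow_lt; lra). assert (HrN : 0 < r ^ N) by (apply pow_lt; lra).
    unfold jmax in *. rewrite <- Hm in *.
    assert (INR (maxdigit q) / (r - 1) <= INR (maxdigit q) / (q - 1)).
    { unfold Rdiv. apply Rmult_le_compat_l; [apply pos_INR|]. apply Rinv_le_contravar; lra. }
    assert (INR (maxdigit q) / (q - 1) * (1 - / q ^ N)
            = INR (maxdigit q) / (q - 1) - INR (maxdigit q) / (q - 1) / q ^ N) by (field; lra).
    assert (INR (maxdigit q) / (r - 1) * (1 - / r ^ N)
            = INR (maxdigit q) / (r - 1) - INR (maxdigit q) / (r - 1) / r ^ N) by (field; lra).
    apply Rabs_le. lra. }
  apply le_of_le_add_div_pow with (C := jmax r) (s := r); auto. assert (H := jmax_ge1 r Hr). lra.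
Qed.

Lemma admissible_agree_dist q x x' c c' j : 1 < q -> admissible q x c -> admissible q x' c' ->
  (forall i, (1 <= i <= j)%nat -> c i = c' i) -> Rabs (x - x') <= jmax q / q ^ j.
Proof.
  intros Hq [_ Hp] [_ Hp'] Hcc. assert (Hd := orbit_diff q x x' c c' j Hcc).
  specialize (Hp j). specialize (Hp' j).
  assert (HqN : 0 < q ^ j) by (apply pow_lt; lra).
  replace (x - x') with ((orbit q x c j - orbit q x' c' j) / q ^ j) by (rewrite Hd; field; lra).
  unfold Rdiv. rewrite Rabs_mult, Rabs_inv, (Rabs_pos_eq (q ^ j)) by lra.
  apply Rmult_le_compat_r; [left; apply Rinv_0_lt_compat; lra|]. apply Rabs_le. lra.
Qed.

(** * Quasi-greedy expansions *)

Lemma largest_upto_spec (P : nat -> bool) (m : nat) :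
  (largest_upto P m <= m)%nat /\
  (largest_upto P m = O \/ P (largest_upto P m) = true) /\
  (forall d, (largest_upto P m < d <= m)%nat -> P d = false).
Proof.
  induction m as [|m IH]; simpl.
  - split; [lia|]. split; [now left|]. intros; lia.
  - destruct (P (S m)) eqn:E.
    + split; [lia|]. split; [now right|]. intros; lia.
    + destruct IH as [H1 [H2 H3]]. split; [lia|]. split; [exact H2|].
      intros d Hd. destruct (Nat.eq_dec d (S m)) as [->|Hne]; [exact E|]. apply H3; lia.
Qed.

Definition quasi_greedy (q : R) (m : nat) (rho : nat -> R) (d : nat -> nat) : Prop :=
  forall N, (d (S N) <= m)%nat /\ INR (d (S N)) < q * rho N /\
    (d (S N) = m \/ q * rho N <= INR (d (S N)) + 1) /\
    rho (S N) = q * rho N - INR (d (S N)).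

Lemma orbit_qg_sum (x q : R) (N : nat) : 1 < q -> x <> 0 ->
  orbit q x (qg_digit x q) N = q ^ N * (x - qg_sum x q N).
Proof.
  intros Hq Hx. induction N as [|N IH]; simpl.
  - lra.
  - rewrite IH. unfold qg_digit. destruct (Req_EM_T x 0); [contradiction|].
    set (d := INR _). assert (q ^ N <> 0) by (apply pow_nonzero; lra).
    field. lra.
Qed.

Lemma qg_digit_step (x q : R) (N : nat) : 1 < q -> x <> 0 ->
  0 < orbit q x (qg_digit x q) N ->
  (qg_digit x q (S N) <= maxdigit q)%nat /\
  INR (qg_digit x q (S N)) < q * orbit q x (qg_digit x q) N /\
  (qg_digit x q (S N) = maxdigit q \/
   q * orbit q x (qg_digit x q) N <= INR (qg_digit x q (S N)) + 1).
Proof.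
  intros Hq Hx Hpos.
  set (a := qg_digit x q (S N)). set (rho := orbit q x (qg_digit x q) N) in *.
  assert (Ea : a = qg_pick x q (qg_sum x q N) (S N)).
  { unfold a, qg_digit. destruct (Req_EM_T x 0); [contradiction|reflexivity]. }
  assert (Erho : rho = q ^ N * (x - qg_sum x q N)) by (apply orbit_qg_sum; auto).
  assert (HqN : 0 < q ^ N) by (apply pow_lt; lra).
  set (P := fun d : nat => if Rlt_dec (qg_sum x q N + INR d / q ^ S N) x then true else false).
  assert (Key : forall d : nat, P d = true <-> INR d < q * rho).
  { intro d. unfold P. destruct (Rlt_dec _ _) as [H|H]; split; intro H'; try easy.
    - rewrite Erho. simpl in H. apply Rmult_lt_reg_r with (/ (q * q ^ N)).
      { apply Rinv_0_lt_compat; nra. }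
      replace (q * (q ^ N * (x - qg_sum x q N)) * / (q * q ^ N)) with (x - qg_sum x q N) by (field; lra).
      unfold Rdiv in H. lra.
    - exfalso. apply H. rewrite Erho in H'. simpl.
      assert (INR d / (q * q ^ N) < x - qg_sum x q N); [|lra].
      apply Rmult_lt_reg_r with (q * q ^ N); [nra|].
      replace (INR d / (q * q ^ N) * (q * q ^ N)) with (INR d) by (field; lra). nra. }
  destruct (largest_upto_spec P (maxdigit q)) as [H1 [H2 H3]].
  assert (Ea' : largest_upto P (maxdigit q) = a) by (rewrite Ea; reflexivity).
  rewrite Ea' in H1, H2, H3.
  split; [exact H1|]. split.
  - destruct H2 as [H2|H2]; [rewrite H2; simpl; nra|now apply Key].
  - destruct (Nat.eq_dec a (maxdigit q)) as [E|E]; [now left|right].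
    assert (Hf := H3 (S a) ltac:(lia)).
    destruct (Rle_lt_dec (q * rho) (INR a + 1)) as [Hl|Hl]; [exact Hl|exfalso].
    assert (INR (S a) < q * rho) by (rewrite S_INR; lra).
    apply Key in H. rewrite H in Hf. discriminate.
Qed.

Lemma qg_digit_quasi_greedy (x q : R) : 1 < q -> 0 < x ->
  quasi_greedy q (maxdigit q) (orbit q x (qg_digit x q)) (qg_digit x q) /\
  forall N, 0 < orbit q x (qg_digit x q) N.
Proof.
  intros Hq Hx.
  assert (Hpos : forall N, 0 < orbit q x (qg_digit x q) N).
  { induction N as [|N IH]; cbn [orbit]; [lra|].
    destruct (qg_digit_step x q N Hq (Rgt_not_eq _ _ Hx) IH) as [_ [H _]]. lra. }
  split; [|exact Hpos]. intro N.
  destruct (qg_digit_step x q N Hq (Rgt_not_eq _ _ Hx) (Hpos N)) as [H1 [H2 H3]].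
  repeat split; auto.
Qed.

Lemma quasi_greedy_nonneg q m rho d : quasi_greedy q m rho d -> 0 <= rho O -> forall N, 0 <= rho N.
Proof. intros H H0 [|N]; [exact H0|]. destruct (H N) as [_ [H2 [_ H4]]]. lra. Qed.

Lemma quasi_greedy_le_jmax q rho d : 1 < q -> quasi_greedy q (maxdigit q) rho d ->
  rho O <= jmax q -> forall N, rho N <= jmax q.
Proof.
  intros Hq H H0. induction N as [|N IH]; [exact H0|].
  destruct (H N) as [H1 [H2 [H3 H4]]]. rewrite H4.
  assert (HT := jmax_fixpoint q Hq). assert (HT1 := jmax_ge1 q Hq).
  destruct H3 as [H3|H3]; [rewrite H3; nra|lra].
Qed.

Lemma quasi_greedy_shift q m rho d k : quasi_greedy q m rho d ->
  quasi_greedy q m (fun N => rho (k + N)%nat) (fun i => d (k + i)%nat).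
Proof. intros H N. replace (k + S N)%nat with (S (k + N)) by lia. apply H. Qed.

Lemma qg_digit_0 q i : qg_digit 0 q i = O.
Proof. destruct i; simpl; [reflexivity|]. destruct (Req_EM_T 0 0); [reflexivity|congruence]. Qed.

Lemma orbit_zero q c N : (forall i, c i = O) -> orbit q 0 c N = 0.
Proof. intros Hc. induction N as [|N IH]; cbn [orbit]; [reflexivity|]. rewrite IH, Hc. simpl. lra. Qed.

Lemma qg_admissible x q : 1 < q -> 0 <= x <= jmax q -> admissible q x (qg_digit x q).
Proof.
  intros Hq Hx. destruct (Req_dec x 0) as [->|Hx0].
  - split; [intros; rewrite qg_digit_0; lia|].
    intro N. rewrite orbit_zero by apply qg_digit_0. assert (HT := jmax_ge1 q Hq). lra.
  - destruct (qg_digit_quasi_greedy x q Hq ltac:(lra)) as [HQ Hpos]. split.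
    + intros [|i] Hi; [lia|]. apply HQ.
    + intro N. split; [left; apply Hpos|]. apply (quasi_greedy_le_jmax q _ _ Hq HQ). simpl. lra.
Qed.

Lemma inJ_bounds x q : inJ x q -> 1 < q /\ 0 <= x <= jmax q.
Proof.
  intros [Hq [c Hc]]. split; [exact Hq|]. apply is_expansion_iff_admissible in Hc; [|exact Hq].
  destruct Hc as [_ Hc]. exact (Hc O).
Qed.

Lemma alpha_quasi_greedy q : 1 < q ->
  quasi_greedy q (maxdigit q) (orbit q 1 (alpha q)) (alpha q) /\ forall N, 0 < orbit q 1 (alpha q) N.
Proof. intros Hq. apply qg_digit_quasi_greedy; lra. Qed.

Lemma quasi_greedy_digit_max q m rho d N : quasi_greedy q m rho d ->
  INR m < q * rho N -> d (S N) = m.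
Proof.
  intros HQ Hgt. destruct (HQ N) as [H1 [_ [[H3|H3] _]]]; [exact H3|].
  apply Nat.le_antisymm; [exact H1|].
  assert (INR m < INR (d (S N)) + 1) by lra.
  rewrite <- S_INR in H. apply INR_lt in H. lia.
Qed.

Lemma alpha_1 q : 1 < q -> alpha q 1 = maxdigit q.
Proof.
  intros Hq. destruct (alpha_quasi_greedy q Hq) as [HQ _].
  apply (quasi_greedy_digit_max _ _ _ _ O HQ). simpl. apply maxdigit_spec in Hq. lra.
Qed.

Lemma alpha_integer_base q : 1 < q -> q = INR (maxdigit q) + 1 ->
  forall i, (1 <= i)%nat -> alpha q i = maxdigit q.
Proof.
  intros Hq Eq. destruct (alpha_quasi_greedy q Hq) as [HQ _].
  assert (Hall : forall N, orbit q 1 (alpha q) N = 1 /\ alpha q (S N) = maxdigit q).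
  { induction N as [|N [IH1 IH2]].
    - split; [reflexivity|]. apply alpha_1; exact Hq.
    - assert (Hp : orbit q 1 (alpha q) (S N) = 1) by (cbn [orbit]; rewrite IH1, IH2; lra).
      split; [exact Hp|]. apply (quasi_greedy_digit_max _ _ _ _ _ HQ). rewrite Hp. lra. }
  intros [|i] Hi; [lia|]. apply Hall.
Qed.

(* While the digits of [alpha r] are maximal its orbit is [jmax r - r^j (jmax r - 1)]. *)
Lemma alpha_prefix_max r L : 1 < r -> r ^ L * (jmax r - 1) < jmax r ->
  forall i, (1 <= i <= L)%nat -> alpha r i = maxdigit r.
Proof.
  intros Hr HL. destruct (alpha_quasi_greedy r Hr) as [HQ _].
  set (sig := orbit r 1 (alpha r)) in *.
  assert (HT := jmax_ge1 r Hr). assert (Hfix := jmax_fixpoint r Hr).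
  assert (Cl : forall j, (j <= L)%nat -> sig j = jmax r - r ^ j * (jmax r - 1) /\
                 forall i, (1 <= i <= j)%nat -> alpha r i = maxdigit r).
  { induction j as [|j IH]; intros Hj.
    - split; [unfold sig; simpl; lra|intros; lia].
    - destruct (IH ltac:(lia)) as [IH1 IH2].
      assert (Hpj : r ^ S j <= r ^ L) by (apply Rle_pow; [lra|lia]).
      assert (Hd : alpha r (S j) = maxdigit r).
      { apply (quasi_greedy_digit_max _ _ _ _ _ HQ). fold sig. rewrite IH1. simpl pow in Hpj. nra. }
      split.
      + destruct (HQ j) as [_ [_ [_ H4]]]. fold sig in H4.
        rewrite H4, Hd, IH1. simpl pow. lra.
      + intros i Hi. destruct (Nat.eq_dec i (S j)) as [->|Hne]; [exact Hd|]. apply IH2. lia. }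
  intros i Hi. apply (proj2 (Cl L (le_n L))). exact Hi.
Qed.

(** * Lexicographic comparisons *)

Definition lex_lt (u v : nat -> nat) : Prop :=
  exists k, (forall i, (i < k)%nat -> u i = v i) /\ (u k < v k)%nat.

Lemma lex_total u v : lex_le u v \/ lex_lt v u.
Proof.
  destruct (classic (forall i, u i = v i)) as [H|H]; [left; now left|].
  apply not_all_ex_not in H. apply ex_min in H as [k [Hk Hmin]].
  assert (Heq : forall i, (i < k)%nat -> u i = v i) by (intros i Hi; apply NNPP; auto).
  destruct (Nat.lt_gt_cases (u k) (v k)) as [[Hl|Hl] _]; [exact Hk|..].
  - left; right. exists k. auto.
  - right. exists k. split; [intros; symmetry; auto|exact Hl].
Qed.

Lemma lex_le_lt_trans u v w : lex_le u v -> lex_lt v w -> lex_lt u w.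
Proof.
  intros [Huv|[k [Hk Hkl]]] [j [Hj Hjl]].
  - exists j. split; [intros; rewrite Huv; auto|rewrite Huv; exact Hjl].
  - destruct (Nat.lt_ge_cases k j) as [H|H].
    + exists k. split; [intros; rewrite Hk by lia; apply Hj; lia|]. rewrite <- Hj by exact H. exact Hkl.
    + exists j. split; [intros; rewrite Hk by lia; apply Hj; lia|].
      destruct (Nat.eq_dec k j) as [->|Hne]; [lia|]. rewrite Hk by lia. exact Hjl.
Qed.

Lemma lex_lt_ext u u' v : (forall i, u i = u' i) -> lex_lt u v -> lex_lt u' v.
Proof. intros H [k [Hk Hl]]. exists k. split; intros; rewrite <- H; auto. Qed.

Lemma lex_le_ext u u' v : (forall i, u i = u' i) -> lex_le u v -> lex_le u' v.
Proof.
  intros H [Huv|[k [Hk Hl]]]; [left; intros; rewrite <- H; auto|].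
  right. exists k. split; intros; rewrite <- H; auto.
Qed.

Lemma quasi_greedy_lex_mono q r m rho rho' d d' :
  quasi_greedy q m rho d -> quasi_greedy r m rho' d' -> 0 < q -> q <= r ->
  0 <= rho O -> rho O <= rho' O -> lex_le (fun i => d (S i)) (fun i => d' (S i)).
Proof.
  intros HQ HQ' Hq0 Hqr H0 H00.
  destruct (lex_total (fun i => d (S i)) (fun i => d' (S i))) as [H|[k [Hk Hl]]]; [exact H|exfalso].
  assert (Hnn := quasi_greedy_nonneg _ _ _ _ HQ H0).
  assert (Hle : forall j, (j <= k)%nat -> rho j <= rho' j).
  { induction j as [|j IH]; intros Hj; [exact H00|].
    destruct (HQ j) as [_ [_ [_ E1]]]. destruct (HQ' j) as [_ [_ [_ E2]]].
    rewrite E1, E2, (Hk j) by lia. specialize (IH ltac:(lia)). specialize (Hnn j).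
    assert (0 <= (r - q) * rho j) by nra. assert (0 <= r * (rho' j - rho j)) by nra. nra. }
  specialize (Hle k (le_n k)). specialize (Hnn k).
  destruct (HQ k) as [Hd1 [Hd2 _]]. destruct (HQ' k) as [_ [_ [[E|Hd3'] _]]]; simpl in Hl.
  - lia.
  - assert (INR (d (S k)) < INR (d' (S k)) + 1) by nra.
    rewrite <- S_INR in H. apply INR_lt in H. lia.
Qed.

(* Strictness: equal digit sequences would make the orbits of [1] in bases [q < r]
   drift apart geometrically, contradicting their boundedness. *)
Lemma alpha_lex_lt q r : 1 < q -> q < r -> maxdigit q = maxdigit r ->
  lex_lt (fun i => alpha q (S i)) (fun i => alpha r (S i)).
Proof.
  intros Hq Hqr Hm.
  destruct (alpha_quasi_greedy q Hq) as [HQ Hpos].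
  destruct (alpha_quasi_greedy r ltac:(lra)) as [HQ' Hpos'].
  rewrite <- Hm in HQ'.
  destruct (quasi_greedy_lex_mono q r (maxdigit q) _ _ _ _ HQ HQ' ltac:(lra) ltac:(lra)
              ltac:(simpl; lra) ltac:(simpl; lra)) as [Heq|H]; [exfalso|exact H].
  set (rho := orbit q 1 (alpha q)) in *. set (rho' := orbit r 1 (alpha r)) in *.
  assert (Hdrift : forall N, (r - q) * r ^ N <= rho' (S N) - rho (S N)).
  { induction N as [|N IH].
    - destruct (HQ O) as [_ [_ [_ E1]]]. destruct (HQ' O) as [_ [_ [_ E2]]].
      rewrite E1, E2, (Heq O). unfold rho, rho'. simpl. lra.
    - destruct (HQ (S N)) as [_ [_ [_ E1]]]. destruct (HQ' (S N)) as [_ [_ [_ E2]]].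
      rewrite E1, E2, (Heq (S N)). specialize (Hpos (S N)). fold rho in Hpos.
      simpl pow. nra. }
  assert (Hbound : forall N, rho' N <= jmax r).
  { apply (quasi_greedy_le_jmax r rho' (alpha r)); [lra| |].
    - rewrite Hm in HQ'. exact HQ'.
    - unfold rho'. simpl. assert (H := jmax_ge1 r ltac:(lra)). lra. }
  destruct (pow_unbounded r (jmax r / (r - q)) ltac:(lra)) as [N HN].
  specialize (Hdrift N). specialize (Hbound (S N)). specialize (Hpos (S N)). fold rho in Hpos.
  assert (jmax r < (r - q) * r ^ N); [|lra].
  apply Rmult_lt_reg_l with (/ (r - q)). { apply Rinv_0_lt_compat; lra. }
  rewrite <- Rmult_assoc, Rinv_l, Rmult_1_l by lra. rewrite Rmult_comm. exact HN.
Qed.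

Lemma qg_tail_lex_le_alpha x q n : 1 < q -> 0 < x -> (1 <= n)%nat ->
  (qg_digit x q n < maxdigit q)%nat ->
  lex_le (fun i => qg_digit x q (n + S i)%nat) (fun i => alpha q (S i)).
Proof.
  intros Hq Hx Hn Hlt. destruct (qg_digit_quasi_greedy x q Hq Hx) as [HQ Hpos].
  destruct (alpha_quasi_greedy q Hq) as [HQ1 _].
  set (rho := orbit q x (qg_digit x q)) in *.
  assert (Hrn : rho n <= 1).
  { destruct n as [|n']; [lia|]. destruct (HQ n') as [_ [_ [[H3|H3] H4]]]; [lia|]. rewrite H4. lra. }
  apply (quasi_greedy_lex_mono q q (maxdigit q) (fun N => rho (n + N)%nat) (orbit q 1 (alpha q))
          (fun i => qg_digit x q (n + i)%nat) (alpha q)).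
  - apply quasi_greedy_shift, HQ.
  - exact HQ1.
  - lra.
  - lra.
  - rewrite Nat.add_0_r. left; apply Hpos.
  - rewrite Nat.add_0_r. simpl. exact Hrn.
Qed.

(** * A criterion for unique expansions *)

(* In [U] every admissible digit is forced: a different admissible choice at step [N+1]
   could be completed (quasi-greedily) into a second expansion. *)
Lemma inU_forced_digit y r c N d : inU y r -> admissible r y c -> (d <= maxdigit r)%nat ->
  0 <= r * orbit r y c N - INR d <= jmax r -> d = c (S N).
Proof.
  intros [[Hr _] HU] Hc Hd Hw.
  set (w' := r * orbit r y c N - INR d) in *.
  assert (He := qg_admissible w' r Hr Hw). set (e := qg_digit w' r) in *.
  set (c' := fun i => if (i <=? N)%nat then c i else if (i =? S N)%nat then d else e (i - S N)%nat).
  assert (Hlow : forall j, (j <= N)%nat -> orbit r y c' j = orbit r y c j).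
  { intros j Hj. apply orbit_ext. intros i Hi. unfold c'.
    destruct (Nat.leb_spec i N); [reflexivity|lia]. }
  assert (HSN : orbit r y c' (S N) = w').
  { cbn [orbit]. rewrite Hlow by lia. unfold c'.
    destruct (Nat.leb_spec (S N) N); [lia|]. rewrite Nat.eqb_refl. reflexivity. }
  assert (Hhigh : forall k, orbit r y c' (S N + k) = orbit r w' e k).
  { intro k. rewrite <- orbit_shift, HSN. apply orbit_ext. intros i Hi. unfold c'.
    destruct (Nat.leb_spec (S N + i) N); [lia|]. destruct (Nat.eqb_spec (S N + i) (S N)); [lia|].
    f_equal. lia. }
  assert (Hc' : admissible r y c').
  { split.
    - intros i Hi. unfold c'. destruct (Nat.leb_spec i N); [apply Hc; lia|].
      destruct (Nat.eqb_spec i (S N)); [exact Hd|]. apply He. lia.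
    - intro M. destruct (Nat.le_gt_cases M N) as [HM|HM].
      + rewrite Hlow by exact HM. apply Hc.
      + replace M with (S N + (M - S N))%nat by lia. rewrite Hhigh. apply He. }
  apply is_expansion_iff_admissible in Hc; [|exact Hr].
  apply is_expansion_iff_admissible in Hc'; [|exact Hr].
  assert (E := HU c' c Hc' Hc (S N) ltac:(lia)).
  unfold c' in E. destruct (Nat.leb_spec (S N) N); [lia|]. rewrite Nat.eqb_refl in E. exact E.
Qed.

Definition tails_criterion (r : R) (c : nat -> nat) : Prop :=
  forall n, (1 <= n)%nat -> (c n < maxdigit r)%nat ->
    lex_lt (fun i => c (n + S i)%nat) (fun i => alpha r (S i)).

Section TailsBelowAlpha.
Variable r : R.
Hypothesis Hr : 1 < r.

Definition tails_below_alpha (d : nat -> nat) : Prop :=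
  lex_lt (fun i => d (S i)) (fun i => alpha r (S i)) /\ tails_criterion r d.

(* The first digit where [d] falls below [alpha] pushes the excess [w - 1] up by a factor [r^k]. *)
Lemma tails_below_alpha_step d w : tails_below_alpha d -> admissible r w d ->
  exists k, (1 <= k)%nat /\ tails_below_alpha (fun i => d (k + i)%nat) /\
    admissible r (orbit r w d k) (fun i => d (k + i)%nat) /\
    r ^ k * (w - 1) < orbit r w d k - 1.
Proof.
  intros [[k0 [Hk0 Hlt]] Hg] Hadm.
  destruct (alpha_quasi_greedy r Hr) as [HQ Hpos].
  assert (HAm : (alpha r (S k0) <= maxdigit r)%nat) by apply HQ.
  exists (S k0). split; [lia|]. split; [split|split].
  - apply (Hg (S k0)); lia.
  - intros j Hj Hdj. apply lex_lt_ext with (u := fun i => d (S k0 + j + S i)%nat).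
    { intros i. f_equal. lia. }
    apply Hg; [lia|exact Hdj].
  - apply admissible_shift, Hadm.
  - assert (Hdf := orbit_diff r w 1 d (alpha r) k0
                     ltac:(intros i Hi; replace i with (S (i - 1)) by lia; apply Hk0; lia)).
    cbn [orbit]. assert (HS := Hpos (S k0)). cbn [orbit] in HS.
    assert (INR (d (S k0)) + 1 <= INR (alpha r (S k0))) by (rewrite <- S_INR; apply le_INR; lia).
    replace (r ^ S k0 * (w - 1)) with (r * (r ^ k0 * (w - 1))) by (simpl; ring).
    rewrite <- Hdf. lra.
Qed.

Lemma tails_below_alpha_bound t : forall d w, tails_below_alpha d -> admissible r w d ->
  w <= 1 + jmax r / r ^ t.
Proof.
  induction t as [|t IH]; intros d w Hg Hp.
  - simpl. destruct Hp as [_ Hp]. specialize (Hp O). simpl in Hp. lra.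
  - destruct (tails_below_alpha_step d w Hg Hp) as [k [Hk [Hg' [Hp' Hlt]]]].
    specialize (IH _ _ Hg' Hp').
    destruct (Rle_lt_dec w 1) as [Hw|Hw].
    { assert (0 <= jmax r / r ^ S t); [|lra].
      apply Rmult_le_pos. assert (H := jmax_ge1 r Hr). lra. left; apply Rinv_0_lt_compat, pow_lt; lra. }
    assert (Hrk : r <= r ^ k) by (rewrite <- (pow_1 r) at 1; apply Rle_pow; [lra|lia]).
    assert (Hrt : 0 < r ^ t) by (apply pow_lt; lra).
    assert (r * (w - 1) < jmax r / r ^ t) by nra.
    simpl. assert (w - 1 < jmax r / (r * r ^ t)); [|lra].
    apply Rmult_lt_reg_l with r; [lra|].
    replace (r * (jmax r / (r * r ^ t))) with (jmax r / r ^ t) by (field; lra). exact H.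
Qed.

Lemma tails_below_alpha_lt1 d w : tails_below_alpha d -> admissible r w d -> w < 1.
Proof.
  intros Hg Hp. destruct (tails_below_alpha_step d w Hg Hp) as [k [Hk [Hg' [Hp' Hlt]]]].
  assert (H : orbit r w d k <= 1).
  { apply le_of_le_add_div_pow with (C := jmax r) (s := r); [exact Hr| |].
    - assert (H := jmax_ge1 r Hr). lra.
    - intro t. exact (tails_below_alpha_bound t _ _ Hg' Hp'). }
  assert (0 < r ^ k) by (apply pow_lt; lra). nra.
Qed.

Lemma orbit_lt1_of_tails_criterion w c k : admissible r w c -> tails_criterion r c ->
  (1 <= k)%nat -> (c k < maxdigit r)%nat -> orbit r w c k < 1.
Proof.
  intros Hadm Hcrit Hk Hck. apply (tails_below_alpha_lt1 (fun i => c (k + i)%nat)).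
  - split; [apply Hcrit; assumption|].
    intros j Hj Hcj. apply lex_lt_ext with (u := fun i => c (k + j + S i)%nat).
    { intro i. f_equal. lia. }
    apply Hcrit; [lia|exact Hcj].
  - apply admissible_shift, Hadm.
Qed.

End TailsBelowAlpha.

(* Two expansions first differing at [k]: the larger digit leaves a negative orbit unless
   the smaller sequence's orbit there is [>= 1]; the criteria on [c] and on its conjugate
   exclude both cases. *)
Lemma inU_of_tails_criterion r y c : 1 < r -> admissible r y c ->
  tails_criterion r c -> tails_criterion r (fun i => maxdigit r - c i)%nat -> inU y r.
Proof.
  intros Hr Hc H1 H2.
  assert (Key : forall e, admissible r y e -> forall i, (1 <= i)%nat -> e i = c i).
  { intros e He. apply NNPP. intro Hne.
    assert (Hex : exists i, (1 <= i)%nat /\ e i <> c i).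
    { apply not_all_ex_not in Hne as [i Hi]. exists i. apply imply_to_and in Hi. exact Hi. }
    apply ex_min in Hex as [k [[Hk1 Hkne] Hmin]].
    destruct k as [|k']; [lia|].
    assert (Hpk : orbit r y e k' = orbit r y c k').
    { apply orbit_ext. intros i Hi. apply NNPP. intro H. apply (Hmin i); [lia|]. split; [lia|exact H]. }
    assert (Epe : orbit r y e (S k') = orbit r y c (S k') + INR (c (S k')) - INR (e (S k'))).
    { cbn [orbit]. rewrite Hpk. ring. }
    assert (Hep := proj2 He (S k')). assert (Hed := proj1 He (S k') Hk1).
    destruct (Nat.lt_gt_cases (c (S k')) (e (S k'))) as [[Hl|Hl] _]; [exact (not_eq_sym Hkne)|..].
    - assert (HL := orbit_lt1_of_tails_criterion r Hr y c (S k') Hc H1 Hk1 ltac:(lia)).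
      assert (INR (c (S k')) + 1 <= INR (e (S k'))) by (rewrite <- S_INR; apply le_INR; lia).
      lra.
    - assert (HL := orbit_lt1_of_tails_criterion r Hr _ _ (S k') (admissible_conj r y c Hr Hc) H2 Hk1).
      assert (Hcd := proj1 Hc (S k') Hk1). specialize (HL ltac:(cbv beta; lia)).
      rewrite orbit_conj in HL; [|apply Hc|apply jmax_fixpoint, Hr].
      assert (INR (e (S k')) + 1 <= INR (c (S k'))) by (rewrite <- S_INR; apply le_INR; lia).
      lra. }
  split.
  - split; [exact Hr|]. exists c. apply is_expansion_iff_admissible; auto.
  - intros c1 c2 Hc1 Hc2 i Hi. apply is_expansion_iff_admissible in Hc1, Hc2; auto.
    rewrite (Key c1 Hc1 i Hi), (Key c2 Hc2 i Hi). reflexivity.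
Qed.

Lemma inU_0 q : 1 < q -> inU 0 q.
Proof.
  intros Hq. apply inU_of_tails_criterion with (c := fun _ => O); auto.
  - split; [intros; lia|]. intro N. rewrite orbit_zero by reflexivity.
    assert (H1 := jmax_ge1 q Hq). lra.
  - intros n Hn Hlt. exists O. split; [intros; lia|]. rewrite alpha_1 by exact Hq. lia.
  - intros n Hn Hlt. lia.
Qed.

(** * Sufficiency of the lexicographic condition *)

Definition lex_condition (x q : R) : Prop :=
  forall n : nat, (1 <= n)%nat -> (0 < qg_digit x q n)%nat ->
    lex_le (fun i => (alpha q 1 - qg_digit x q (n + 1 + i))%nat) (fun i => alpha q (S i)).

Lemma inU_qg_digits_larger_base x q r y : 1 < q -> q < r -> maxdigit r = maxdigit q -> 0 < x ->
  lex_condition x q -> admissible r y (qg_digit x q) -> inU y r.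
Proof.
  intros Hq Hqr Hmr Hx HC Hy. set (a := qg_digit x q) in *.
  assert (Halpha := alpha_lex_lt q r Hq Hqr (eq_sym Hmr)).
  apply inU_of_tails_criterion with (c := a); [lra|exact Hy| |].
  - intros n Hn Hlt. rewrite Hmr in Hlt.
    apply lex_le_lt_trans with (fun i => alpha q (S i)); [|exact Halpha].
    apply qg_tail_lex_le_alpha; auto.
  - intros n Hn Hlt. rewrite Hmr in Hlt |- *.
    apply lex_le_lt_trans with (fun i => alpha q (S i)); [|exact Halpha].
    apply lex_le_ext with (fun i => (alpha q 1 - a (n + 1 + i))%nat).
    + intro i. rewrite alpha_1 by exact Hq. do 2 f_equal. lia.
    + cbv beta in Hlt. apply HC; [exact Hn|fold a; lia].
Qed.

(* For [q] not an integer, raising the base slightly keeps [A_q] and makes the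
   quasi-greedy digits of [x] the unique expansion of a nearby point. *)
Lemma closure_of_lex_condition_nonint x q : inJ x q -> q < INR (maxdigit q) + 1 ->
  lex_condition x q -> in_closure_U x q.
Proof.
  intros HJ Hnint HC eps Heps.
  destruct (inJ_bounds x q HJ) as [Hq Hx].
  destruct (maxdigit_spec q Hq) as [M1 [M2 M3]].
  set (m := maxdigit q) in *.
  destruct (Req_dec x 0) as [Hx0|Hx0].
  { exists 0, q. split; [apply inU_0; exact Hq|]. rewrite Hx0, !Rminus_diag, Rabs_R0. lra. }
  set (C := jmax_slope q). assert (HC0 : 0 <= C) by (apply jmax_slope_nonneg, Hq).
  destruct (exists_pos_le_all ((q - 1) / 2 :: (INR m + 1 - q) / 2 :: eps / (2 * (C + 1)) :: nil))
    as [delta [Hd0 Hd]].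
  { intros z Hz. repeat destruct Hz as [<-|Hz]; try lra; [apply Rdiv_lt_0_compat; lra|destruct Hz]. }
  assert (Hd1 := Hd ((q - 1) / 2) ltac:(simpl; tauto)).
  assert (Hd2 := Hd ((INR m + 1 - q) / 2) ltac:(simpl; tauto)).
  assert (Hd3 := Hd (eps / (2 * (C + 1))) ltac:(simpl; tauto)).
  assert (HdC : delta * (2 * (C + 1)) <= eps) by (apply Rmult_le_of_le_div; [lra|exact Hd3]).
  assert (HdC0 : 0 <= delta * C) by nra.
  set (r := q + delta).
  assert (Hr : 1 < r) by (unfold r; lra).
  assert (Hmr : maxdigit r = m) by (apply maxdigit_of_bounds; unfold r; lra).
  set (a := qg_digit x q).
  assert (Hpa := qg_admissible x q Hq Hx).
  destruct (admissible_exists r a Hr) as [y Hy].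
  { intros i Hi. rewrite Hmr. apply Hpa. exact Hi. }
  exists y, r. split; [|split].
  - apply (inU_qg_digits_larger_base x q r y); auto; [unfold r; lra|lra].
  - assert (Hxy := admissible_base_change_dist q r x y a Hq ltac:(unfold r; lra)
                     ltac:(rewrite Hmr; reflexivity) Hpa Hy).
    assert (Hjm := jmax_close q r delta Hq Hmr ltac:(unfold r; rewrite Rabs_pos_eq; lra) Hd1).
    fold C in Hjm. apply Rabs_le_between in Hjm. lra.
  - unfold r. rewrite Rabs_minus_sym. replace (q + delta - q) with delta by ring.
    rewrite Rabs_pos_eq; lra.
Qed.

(* Inserting a digit [0] or [1] at every multiple of [K] breaks all constant runs of
   length [> K]. *)
Definition break_runs (K : nat) (a : nat -> nat) (i : nat) : nat :=
  if (i mod K =? 0)%nat then (if (a (i - 1)%nat =? 0)%nat then 1%nat else 0%nat) else a i.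

Lemma multiple_after K n : (2 <= K)%nat ->
  exists p, (n + 2 <= p <= n + 1 + K)%nat /\ p mod K = O /\ (p - 1) mod K <> O.
Proof.
  intros HK. set (t := ((n + 1) / K)%nat). set (s := ((n + 1) mod K)%nat).
  assert (E : (n + 1 = K * t + s)%nat) by (apply Nat.div_mod; lia).
  assert (Hs : (s < K)%nat) by (apply Nat.mod_upper_bound; lia).
  exists ((t + 1) * K)%nat. split; [nia|]. split.
  - apply Nat.Div0.mod_mul.
  - replace ((t + 1) * K - 1)%nat with ((K - 1) + t * K)%nat by nia.
    rewrite Nat.Div0.mod_add, Nat.mod_small by lia. lia.
Qed.

Lemma break_runs_nonconst K a n v : (2 <= K)%nat ->
  exists i, (i <= K)%nat /\ break_runs K a (n + S i) <> v.
Proof.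
  intros HK. destruct (multiple_after K n HK) as [p [Hp1 [Hp2 Hp3]]].
  destruct (Nat.eq_dec (a (p - 1)%nat) v) as [E|E].
  - exists (p - n - 1)%nat. split; [lia|]. replace (n + S (p - n - 1))%nat with p by lia.
    unfold break_runs. rewrite Hp2, E. simpl. destruct (Nat.eqb_spec v 0); lia.
  - exists (p - n - 2)%nat. split; [lia|]. replace (n + S (p - n - 2))%nat with (p - 1)%nat by lia.
    unfold break_runs. destruct (Nat.eqb_spec ((p - 1) mod K) 0); [contradiction|exact E].
Qed.

Lemma break_runs_digits K a m : (1 <= m)%nat -> (forall i, (1 <= i)%nat -> (a i <= m)%nat) ->
  forall i, (1 <= i)%nat -> (break_runs K a i <= m)%nat.
Proof.
  intros Hm Ha i Hi. unfold break_runs.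
  destruct (i mod K =? 0)%nat; [destruct (a (i - 1)%nat =? 0)%nat; lia|apply Ha, Hi].
Qed.

Lemma break_runs_dist q x x' a K : 1 < q -> admissible q x a -> admissible q x' (break_runs K a) ->
  Rabs (x - x') <= jmax q / q ^ (K - 1).
Proof.
  intros Hq Ha Hx'. apply (admissible_agree_dist q x x' a (break_runs K a)); auto.
  intros i Hi. unfold break_runs. rewrite Nat.mod_small by lia.
  destruct (Nat.eqb_spec i 0); [lia|reflexivity].
Qed.

Lemma tails_criterion_of_short_runs r c L :
  (forall i, (1 <= i <= L)%nat -> alpha r i = maxdigit r) ->
  (forall i, (1 <= i)%nat -> (c i <= maxdigit r)%nat) ->
  (forall n, exists i, (i < L)%nat /\ c (n + S i)%nat <> maxdigit r) -> tails_criterion r c.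
Proof.
  intros Hpref Hc Hruns n Hn _.
  destruct (ex_min (fun i => c (n + S i)%nat <> maxdigit r)) as [k [Hk Hkmin]].
  { destruct (Hruns n) as [i [_ Hi]]. exists i. exact Hi. }
  assert (HkL : (k < L)%nat).
  { destruct (Hruns n) as [i [HiL Hi]]. destruct (Nat.le_gt_cases k i) as [H|H]; [lia|].
    exfalso. exact (Hkmin i H Hi). }
  exists k. split.
  - intros i Hi. rewrite Hpref by lia. apply NNPP, Hkmin, Hi.
  - rewrite Hpref by lia. assert (c (n + S k)%nat <= maxdigit r)%nat by (apply Hc; lia). lia.
Qed.

Lemma inU_of_short_runs r y c L : 1 < r -> admissible r y c ->
  (forall i, (1 <= i <= L)%nat -> alpha r i = maxdigit r) ->
  (forall v n, exists i, (i < L)%nat /\ c (n + S i)%nat <> v) -> inU y r.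
Proof.
  intros Hr Hy Hpref Hruns. apply inU_of_tails_criterion with (c := c); [exact Hr|exact Hy| |].
  - apply (tails_criterion_of_short_runs r c L Hpref (proj1 Hy)). apply Hruns.
  - apply (tails_criterion_of_short_runs r _ L Hpref); [intros; lia|].
    intro n. destruct (Hruns O n) as [i [Hi Hv]]. exists i. split; [exact Hi|].
    assert (c (n + S i)%nat <= maxdigit r)%nat by (apply (proj1 Hy); lia). lia.
Qed.

Lemma lowered_integer_base q eta L : 1 < q -> q = INR (maxdigit q) + 1 -> 0 < eta <= 1 / 2 ->
  eta * (2 * q ^ L * (jmax_slope q + 1)) <= 1 ->
  1 < q - eta /\ maxdigit (q - eta) = maxdigit q /\ jmax (q - eta) - 1 <= eta * jmax_slope q /\
  forall i, (1 <= i <= L)%nat -> alpha (q - eta) i = maxdigit (q - eta).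
Proof.
  intros Hq Hint Heta Hsmall.
  destruct (maxdigit_spec q Hq) as [_ [_ M3]].
  assert (Hm1 : 1 <= INR (maxdigit q)) by (change 1 with (INR 1); apply le_INR; exact M3).
  assert (HTq : jmax q = 1) by (unfold jmax; rewrite Hint at 2; field; lra).
  set (r := q - eta). set (C := jmax_slope q). assert (HC0 : 0 <= C) by apply jmax_slope_nonneg, Hq.
  assert (Hr : 1 < r) by (unfold r; lra).
  assert (Hmr : maxdigit r = maxdigit q) by (apply maxdigit_of_bounds; unfold r; lra).
  assert (HTr : jmax r - 1 <= eta * C).
  { assert (H := jmax_close q r eta Hq Hmr ltac:(unfold r; rewrite Rabs_left1; lra) ltac:(lra)).
    fold C in H. apply Rabs_le_between in H. lra. }
  do 3 (split; [assumption|]).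
  apply alpha_prefix_max; [exact Hr|]. assert (HTr1 := jmax_ge1 r Hr).
  assert (HrL : 0 <= r ^ L <= q ^ L) by (split; [apply pow_le|apply pow_incr]; unfold r; lra).
  assert (r ^ L * (jmax r - 1) <= q ^ L * (eta * C)) by (apply Rmult_le_compat; lra).
  fold C in Hsmall. nra.
Qed.

(* For an integer base [q = m + 1] we lower the base slightly, so that [alpha r] begins with
   many digits [m], and break the long runs of [0] and [m] in the digits of [x] far out. *)
Lemma closure_at_integer_base x q : inJ x q -> q = INR (maxdigit q) + 1 -> in_closure_U x q.
Proof.
  intros HJ Hint eps Heps.
  destruct (inJ_bounds x q HJ) as [Hq Hx].
  destruct (maxdigit_spec q Hq) as [_ [_ M3]].
  assert (HTq : jmax q = 1) by (unfold jmax; rewrite Hint at 2; field; lra).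
  set (a := qg_digit x q). assert (Ha := qg_admissible x q Hq Hx). fold a in Ha.
  destruct (pow_inv_small q (eps / 2) Hq ltac:(lra)) as [N HN].
  set (K := (N + 2)%nat). set (L := (K + 1)%nat). set (c := break_runs K a).
  assert (Hc := break_runs_digits K a (maxdigit q) M3 (proj1 Ha)). fold c in Hc.
  destruct (admissible_exists q c Hq Hc) as [x' Hx'].
  assert (Hxx' : Rabs (x - x') < eps / 2).
  { assert (H := break_runs_dist q x x' a K Hq Ha Hx'). rewrite HTq in H.
    assert (/ q ^ (K - 1) < eps / 2) by (apply HN; unfold K; lia). unfold Rdiv in H. lra. }
  set (C := jmax_slope q). assert (HC0 : 0 <= C) by (apply jmax_slope_nonneg, Hq).
  assert (HqL : 0 < q ^ L) by (apply pow_lt; lra).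
  destruct (exists_pos_le_all (1 / 2 :: eps / (2 * (C + 1)) :: 1 / (2 * q ^ L * (C + 1)) :: nil))
    as [eta [He0 He]].
  { intros z Hz. repeat destruct Hz as [<-|Hz]; try lra; [| |destruct Hz]; apply Rdiv_lt_0_compat; nra. }
  assert (He1 := He (1 / 2) ltac:(simpl; tauto)).
  assert (HetaC : eta * (2 * (C + 1)) <= eps).
  { apply Rmult_le_of_le_div; [lra|]. apply He. simpl; tauto. }
  assert (HetaL : eta * (2 * q ^ L * (C + 1)) <= 1).
  { apply Rmult_le_of_le_div; [nra|]. apply He. simpl; tauto. }
  destruct (lowered_integer_base q eta L Hq Hint ltac:(lra) HetaL) as [Hr [Hmr [HTr Hpref]]].
  fold C in HTr. set (r := q - eta) in *.
  assert (HcR : forall i, (1 <= i)%nat -> (c i <= maxdigit r)%nat) by (rewrite Hmr; exact Hc).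
  destruct (admissible_exists r c Hr HcR) as [y Hy].
  exists y, r. split; [|split].
  - apply (inU_of_short_runs r y c L Hr Hy Hpref).
    intros v n. destruct (break_runs_nonconst K a n v ltac:(unfold K; lia)) as [i [Hi Hv]].
    exists i. split; [unfold L; lia|exact Hv].
  - assert (Hyx' := admissible_base_change_dist r q y x' c Hr ltac:(unfold r; lra)
                      ltac:(rewrite Hmr; reflexivity) Hy Hx').
    rewrite Rabs_minus_sym in Hyx'.
    replace (x - y) with ((x - x') + (x' - y)) by ring.
    eapply Rle_lt_trans; [apply Rabs_triang|]. nra.
  - unfold r. replace (q - (q - eta)) with eta by ring. rewrite Rabs_pos_eq; nra.
Qed.

(** * Necessity of the lexicographic condition *)

Lemma lex_condition_integer_base x q : 1 < q -> q = INR (maxdigit q) + 1 -> lex_condition x q.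
Proof.
  intros Hq Hint n _ _.
  destruct (lex_total (fun i => (alpha q 1 - qg_digit x q (n + 1 + i))%nat) (fun i => alpha q (S i)))
    as [H|[k [_ Hk]]]; [exact H|exfalso].
  rewrite !(alpha_integer_base q Hq Hint) in Hk by lia. lia.
Qed.

(* A violation of the condition after position [n] leaves a gap of more than [1] above the
   orbit: comparing the conjugate tail with [alpha q] shows [jmax q - rho n > 1]. *)
Lemma lex_violation_gap x q n : 1 < q -> q < INR (maxdigit q) + 1 -> 0 < x -> (1 <= n)%nat ->
  lex_lt (fun i => alpha q (S i)) (fun i => (alpha q 1 - qg_digit x q (n + 1 + i))%nat) ->
  orbit q x (qg_digit x q) n + 1 < jmax q.
Proof.
  intros Hq Hn Hx Hn1 [k [Hk Hl]].
  rewrite alpha_1 in Hk, Hl by exact Hq.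
  set (m := maxdigit q) in *. set (a := qg_digit x q) in *. set (A := alpha q) in *.
  destruct (qg_digit_quasi_greedy x q Hq Hx) as [HQ Hpos].
  destruct (alpha_quasi_greedy q Hq) as [HQ1 Hpos1].
  fold a in HQ, Hpos. fold A in HQ1, Hpos1.
  set (rho := orbit q x a) in *. set (sig := orbit q 1 A) in *.
  assert (HT1 := jmax_gt1 q Hq Hn). assert (Hfix := jmax_fixpoint q Hq). fold m in Hfix.
  assert (Hw : forall j, orbit q (jmax q - rho n) (fun i => (m - a (n + i))%nat) j = jmax q - rho (n + j)%nat).
  { intro j. rewrite orbit_conj with (c := fun i => a (n + i)%nat).
    - unfold rho. rewrite orbit_shift. reflexivity.
    - intros i Hi. destruct (n + i)%nat as [|p] eqn:E; [lia|]. apply HQ.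
    - exact Hfix. }
  assert (Hdiff : orbit q (jmax q - rho n) (fun i => (m - a (n + i))%nat) k - sig k
                  = q ^ k * (jmax q - rho n - 1)).
  { apply orbit_diff. intros i Hi. destruct i as [|i']; [lia|].
    rewrite (Hk i') by lia. do 2 f_equal. lia. }
  rewrite Hw in Hdiff.
  destruct (HQ (n + k)%nat) as [Ha1 [Ha2 [Ha3 Ha4]]].
  destruct (HQ1 k) as [Hs1 [Hs2 [Hs3 Hs4]]].
  replace (S (n + k)) with (n + 1 + k)%nat in Ha1, Ha2, Ha3 by lia.
  destruct Ha3 as [Ha3|Ha3]; [lia|].
  destruct Hs3 as [Hs3|Hs3]; [lia|].
  assert (Hsum : INR (a (n + 1 + k)%nat) + INR (A (S k)) + 1 <= INR m).
  { rewrite <- plus_INR, <- S_INR. apply le_INR. lia. }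
  assert (Hkey : q * (jmax q - rho (n + k)%nat - sig k) >= jmax q - 1) by lra.
  rewrite Hdiff in Hkey.
  assert (Hqk : 0 < q ^ k) by (apply pow_lt; lra).
  destruct (Rle_lt_dec (jmax q - rho n - 1) 0) as [Hneg|Hgap]; [|lra].
  assert (q ^ k * (jmax q - rho n - 1) <= 0) by nra. nra.
Qed.

(* Error bound, in units of [eps >= |r - q|], for following an orbit in base [q] by one in
   base [r]: an error [e] at step [j] grows to at most [(q + 1) e + T] at step [j + 1]. *)
Fixpoint track_bound (q T : R) (j : nat) : R :=
  match j with O => 1 | S j' => (q + 1) * track_bound q T j' + T end.

Lemma track_bound_mono q T : 0 < q -> 0 <= T -> forall j n, (j <= n)%nat ->
  1 <= track_bound q T j <= track_bound q T n.
Proof.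
  intros Hq HT.
  assert (H1 : forall j, 1 <= track_bound q T j) by (induction j as [|j IH]; cbn [track_bound]; nra).
  intros j n Hjn. split; [apply H1|]. induction Hjn as [|n Hjn IH]; [lra|].
  cbn [track_bound]. specialize (H1 n). nra.
Qed.

Lemma finite_min_pos (rho : nat -> R) : (forall j, 0 < rho j) ->
  forall n, exists mu, 0 < mu /\ forall j, (j <= n)%nat -> mu <= rho j.
Proof.
  intros H n. induction n as [|n [mu [Hmu Hmj]]].
  - exists (rho O). split; [apply H|]. intros j Hj. replace j with O by lia. lra.
  - exists (Rmin mu (rho (S n))). split; [apply Rmin_pos; auto|].
    intros j Hj. destruct (Nat.eq_dec j (S n)) as [->|Hne]; [apply Rmin_r|].
    eapply Rle_trans; [apply Rmin_l|]. apply Hmj. lia.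
Qed.

(* Near a quasi-greedy orbit staying above [mu], the unique expansion of a point of [U]
   has no choice but to copy the quasi-greedy digits, by [inU_forced_digit]. *)
Lemma inU_follows_quasi_greedy q r rho a y b n eps mu :
  1 < q -> quasi_greedy q (maxdigit q) rho a -> maxdigit r = maxdigit q ->
  (forall j, 0 <= rho j <= jmax q) -> (forall j, (j <= n)%nat -> mu <= rho j) ->
  inU y r -> admissible r y b ->
  Rabs (y - rho O) <= eps -> Rabs (r - q) <= eps -> eps <= 1 ->
  jmax q - eps * jmax_slope q <= jmax r ->
  eps * (track_bound q (jmax q) n + jmax_slope q) <= mu ->
  eps * (track_bound q (jmax q) n + jmax_slope q) <= jmax q - 1 ->
  forall j, (j <= n)%nat -> (forall i, (1 <= i <= j)%nat -> b i = a i) /\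
    Rabs (orbit r y b j - rho j) <= eps * track_bound q (jmax q) j.
Proof.
  intros Hq HQ Hmr Hrho Hmu HU Hb Hy Hrq He1 HTr Hsmall1 Hsmall2.
  assert (Hr : 1 < r) by apply HU.
  set (T := jmax q) in *. set (K := track_bound q T). fold (K n) in Hsmall1, Hsmall2.
  assert (HK := track_bound_mono q T ltac:(lra) ltac:(specialize (Hrho O); lra)). fold K in HK.
  assert (HC := jmax_slope_nonneg q Hq).
  assert (Heps : 0 <= eps) by (eapply Rle_trans; [apply Rabs_pos|exact Hy]).
  apply Rabs_le_between in Hrq. assert (HfixR := jmax_fixpoint r Hr). rewrite Hmr in HfixR.
  induction j as [|j IH]; intros Hj.
  - split; [intros; lia|]. cbn [orbit]. unfold K. cbn [track_bound]. lra.
  - destruct (IH ltac:(lia)) as [IH1 IH2]. apply Rabs_le_between in IH2.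
    set (u := orbit r y b j) in *.
    assert (HKj : K (S j) <= K n) by (apply HK; lia).
    specialize (Hrho j) as Hrj.
    set (D := r * u - q * rho j).
    assert (HD : - (eps * K (S j)) <= D <= eps * K (S j)).
    { unfold K, D. cbn [track_bound]. fold K.
      replace (r * u - q * rho j) with (r * (u - rho j) + (r - q) * rho j) by ring.
      split; nra. }
    destruct (HQ j) as [Ha1 [Ha2 [Ha3 Ha4]]].
    assert (Hmuj : mu <= rho (S j)) by (apply Hmu; lia).
    assert (HeK : eps * K (S j) <= eps * K n) by (apply Rmult_le_compat_l; lra).
    assert (HeC : 0 <= eps * jmax_slope q) by (apply Rmult_le_pos; lra).
    assert (Hadm : 0 <= r * u - INR (a (S j)) <= jmax r).
    { assert (E : r * u - INR (a (S j)) = rho (S j) + D) by (unfold D; lra).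
      split; [lra|].
      destruct Ha3 as [Ha3|Ha3].
      - rewrite Ha3. assert (Hu := proj2 Hb j). fold u in Hu. nra.
      - lra. }
    assert (Hf := inU_forced_digit y r b j (a (S j)) HU Hb ltac:(rewrite Hmr; exact Ha1) Hadm).
    split.
    + intros i Hi. destruct (Nat.eq_dec i (S j)) as [->|Hne]; [symmetry; exact Hf|]. apply IH1. lia.
    + cbn [orbit]. fold u. rewrite <- Hf. apply Rabs_le. unfold D in HD. lra.
Qed.

Lemma in_closure_U_near x q eps : 1 < q -> q < INR (maxdigit q) + 1 -> in_closure_U x q ->
  0 < eps -> eps <= (q - INR (maxdigit q)) / 2 -> eps <= INR (maxdigit q) + 1 - q ->
  eps <= (q - 1) / 2 ->
  exists y r b, inU y r /\ admissible r y b /\ maxdigit r = maxdigit q /\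
    Rabs (y - x) <= eps /\ Rabs (r - q) <= eps /\ jmax q - eps * jmax_slope q <= jmax r.
Proof.
  intros Hq Hnint Hcl Heps He1 He2 He3.
  destruct (maxdigit_spec q Hq) as [M1 _].
  destruct (Hcl eps Heps) as [y [r [HU [Hxy Hqr]]]].
  apply Rabs_def2 in Hxy. apply Rabs_def2 in Hqr.
  assert (Hmr : maxdigit r = maxdigit q) by (apply maxdigit_of_bounds; lra).
  assert (HTr := jmax_close q r eps Hq Hmr ltac:(apply Rabs_le; lra) He3).
  apply Rabs_le_between in HTr.
  destruct HU as [[Hr [b Hb]] HUu].
  apply is_expansion_iff_admissible in Hb as Hb'; [|exact Hr].
  exists y, r, b. split; [split; [split; [exact Hr|exists b; exact Hb]|exact HUu]|].
  split; [exact Hb'|]. split; [exact Hmr|].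
  split; [apply Rabs_le; lra|]. split; [apply Rabs_le; lra|lra].
Qed.

(* If the gap of [lex_violation_gap] exists, near [(x, q)] the digit [a_n - 1] is also
   admissible for a point of [U], contradicting uniqueness. *)
Lemma not_in_closure_U_of_gap x q n : 1 < q -> q < INR (maxdigit q) + 1 -> 0 < x -> x <= jmax q ->
  (1 <= n)%nat -> (0 < qg_digit x q n)%nat -> orbit q x (qg_digit x q) n + 1 < jmax q ->
  ~ in_closure_U x q.
Proof.
  intros Hq Hnint Hx HxT Hn1 Han Hgap Hcl.
  destruct (maxdigit_spec q Hq) as [M1 _].
  set (m := maxdigit q) in *. set (a := qg_digit x q) in *.
  destruct (qg_digit_quasi_greedy x q Hq Hx) as [HQ Hpos]. fold a in HQ, Hpos.
  set (rho := orbit q x a) in *. set (T := jmax q) in *.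
  assert (Hrho : forall j, 0 <= rho j <= T).
  { intro j. split; [left; apply Hpos|]. apply (quasi_greedy_le_jmax q rho a Hq HQ). exact HxT. }
  set (delta := T - 1 - rho n).
  assert (Hdelta : 0 < delta <= T - 1) by (specialize (Hpos n); unfold delta; lra).
  destruct (finite_min_pos rho Hpos n) as [mu [Hmu Hmuj]].
  set (C := jmax_slope q). assert (HC := jmax_slope_nonneg q Hq). fold C in HC.
  set (Kn := track_bound q T n).
  assert (HKn : 1 <= Kn) by (apply (track_bound_mono q T ltac:(lra) ltac:(specialize (Hrho O); lra) n n); lia).
  destruct (exists_pos_le_all
              (1 :: (q - 1) / 2 :: (q - INR m) / 2 :: INR m + 1 - q :: Rmin mu delta / (Kn + C) :: nil))
    as [eps [Heps Hle]].
  { intros z Hz. repeat destruct Hz as [<-|Hz]; try lra; [|destruct Hz].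
    apply Rdiv_lt_0_compat; [apply Rmin_pos|]; lra. }
  assert (He5 : eps * (Kn + C) <= Rmin mu delta).
  { apply Rmult_le_of_le_div; [lra|]. apply Hle. simpl; tauto. }
  assert (Hmin := Rmin_l mu delta). assert (Hmin' := Rmin_r mu delta).
  assert (HeKC : eps * (Kn + C) = eps * Kn + eps * C) by ring.
  destruct (in_closure_U_near x q eps Hq Hnint Hcl Heps (Hle ((q - INR m) / 2) ltac:(simpl; tauto))
              (Hle (INR m + 1 - q) ltac:(simpl; tauto)) (Hle ((q - 1) / 2) ltac:(simpl; tauto)))
    as [y [r [b [HU [Hb [Hmr [Hxy [Hqr HTr]]]]]]]].
  fold T C in HTr.
  assert (Htrack := inU_follows_quasi_greedy q r rho a y b n eps mu Hq HQ Hmr Hrho Hmuj HU Hb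
                      ltac:(unfold rho; simpl; exact Hxy) Hqr (Hle 1 ltac:(simpl; tauto))
                      ltac:(fold T C; lra) ltac:(fold T C Kn; lra) ltac:(fold T C Kn; lra)).
  destruct n as [|n']; [lia|].
  destruct (Htrack (S n') (le_n _)) as [Hagree Horb]. fold T Kn in Horb. apply Rabs_le_between in Horb.
  assert (Hbn : b (S n') = a (S n')) by (apply Hagree; lia).
  assert (Hadm : 0 <= r * orbit r y b n' - INR (a (S n') - 1) <= jmax r).
  { rewrite minus_INR by lia. change (INR 1) with 1.
    assert (Hu := proj2 Hb (S n')). cbn [orbit] in Hu, Horb. rewrite Hbn in Hu, Horb.
    assert (Edelta : delta = T - 1 - rho (S n')) by reflexivity. lra. }
  assert (Ham : (a (S n') <= m)%nat) by apply HQ.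
  assert (Hf := inU_forced_digit y r b n' (a (S n') - 1) HU Hb ltac:(rewrite Hmr; lia) Hadm).
  lia.
Qed.

Lemma lex_condition_of_closure x q : inJ x q -> in_closure_U x q -> lex_condition x q.
Proof.
  intros HJ Hcl. destruct (inJ_bounds x q HJ) as [Hq Hx].
  destruct (maxdigit_spec q Hq) as [_ [M2 _]].
  destruct (Req_dec q (INR (maxdigit q) + 1)) as [Hint|Hnint].
  { apply lex_condition_integer_base; assumption. }
  intros n Hn Ha.
  destruct (lex_total (fun i => (alpha q 1 - qg_digit x q (n + 1 + i))%nat) (fun i => alpha q (S i)))
    as [H|H]; [exact H|exfalso].
  assert (Hx0 : 0 < x).
  { destruct (Req_dec x 0) as [E|E]; [|lra]. rewrite E, qg_digit_0 in Ha. lia. }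
  apply (not_in_closure_U_of_gap x q n Hq ltac:(lra) Hx0 (proj2 Hx) Hn Ha); [|exact Hcl].
  apply lex_violation_gap; auto. lra.
Qed.

Theorem theorem1p2 (x q : R) :
  inJ x q ->
  (in_closure_U x q <->
   forall n : nat, (1 <= n)%nat -> (0 < qg_digit x q n)%nat ->
     lex_le (fun i => (alpha q 1 - qg_digit x q (n + 1 + i))%nat)
            (fun i => alpha q (S i))).
Proof.
  intros HJ. split; [apply lex_condition_of_closure, HJ|intros HC].
  destruct (inJ_bounds x q HJ) as [Hq _].
  destruct (maxdigit_spec q Hq) as [_ [M2 _]].
  destruct (Req_dec q (INR (maxdigit q) + 1)) as [Hint|Hnint].
  - apply closure_at_integer_base; assumption.
  - apply closure_of_lex_condition_nonint; [exact HJ|lra|exact HC].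
Qed.
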